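(* Let $\mathbb{M}$ be $d$-dimensional Minkowski spacetime ($d\ge 2$) with points written $(t,\vec x)$, $t\in\mathbb{R}$, $\vec x\in\mathbb{R}^{d-1}$. Let $\mathcal{H}$ be a Hilbert space, let $U$ be a unitary representation of the additive group $\mathbb{R}^{d-1}$ on $\mathcal{H}$, and let $\hat\psi:\mathbb{M}\to\mathcal{B}(\mathcal{H})$ and $\hat\pi:\mathbb{M}\to\mathcal{B}(\mathcal{H})$ be such that (1) $U$ is weakly continuous; (2) $U(\vec y)\hat\pi(t,\vec x)U(\vec y)^\dagger=\hat\pi(t,\vec x+\vec y)$ for all $\vec x,\vec y\in\mathbb{R}^{d-1}$ and all $t\in\mathbb{R}$. Then for every $t\in\mathbb{R}$: $[\hat\psi(t,\vec x),\hat\pi(t,\vec y)]=0$ for all $\vec x\neq\vec y\in\mathbb{R}^{d-1}$ if and only if $[\hat\psi(t,\vec x),\hat\pi(t,\vec y)]=0$ for all $\vec x,\vec y\in\mathbb{R}^{d-1}$; and $\{\hat\psi(t,\vec x),\hat\pi(t,\vec y)\}=0$ for all $\vec x\neq\vec y\in\mathbb{R}^{d-1}$ if and only if $\{\hat\psi(t,\vec x),\hat\pi(t,\vec y)\}=0$ for all $\vec x,\vec y\in\mathbb{R}^{d-1}$.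
   Context: $\mathcal{B}(\mathcal{H})$ denotes the bounded operators on $\mathcal{H}$. $[A,B]=AB-BA$, $\{A,B\}=AB+BA$. *)

From HB Require Import structures.
From mathcomp Require Import all_boot all_order all_algebra.
From mathcomp Require Import all_classical all_reals all_analysis.
From mathcomp Require Import complex.
Import Order.TTheory GRing.Theory Num.Theory.
Import numFieldNormedType.Exports.
Set Implicit Arguments. Unset Strict Implicit. Unset Printing Implicit Defensive.
Local Open Scope ring_scope.

(* The complex numbers over a real type R, seen as a numFieldType
   (so that MathComp-Analysis equips them with their usual topology). *)
Definition Cx (R : realType) : numFieldType := R[i].

Section Hilbert.
Variable R : realType.
Variable H : lmodType (Cx R).

(* Physics convention: the inner product <a, b> is linear in the second
   argument and conjugate-linear in the first. *)
Record is_inner_product (ip : H -> H -> Cx R) : Prop := {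
  ip_linear : forall (a : H) (c : Cx R) (u v : H),
      ip a (c *: u + v) = c * ip a u + ip a v;
  ip_conj_sym : forall u v : H, ip u v = conjc (ip v u);
  ip_pos : forall v : H, 0 <= ip v v;
  ip_definite : forall v : H, ip v v = 0 -> v = 0
}.

Definition ipnorm (ip : H -> H -> Cx R) (v : H) : R :=
  Num.sqrt (complex.Re (ip v v)).

Definition ip_complete (ip : H -> H -> Cx R) : Prop :=
  forall u : nat -> H,
    (forall e : R, 0 < e -> exists N : nat, forall m n : nat,
        (N <= m)%N -> (N <= n)%N -> ipnorm ip (u m - u n) < e) ->
    exists l : H, forall e : R, 0 < e -> exists N : nat, forall n : nat,
        (N <= n)%N -> ipnorm ip (u n - l) < e.

Definition is_hilbert (ip : H -> H -> Cx R) : Prop :=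
  is_inner_product ip /\ ip_complete ip.

Definition bounded_op (ip : H -> H -> Cx R) (T : H -> H) : Prop :=
  (forall (c : Cx R) (u v : H), T (c *: u + v) = c *: T u + T v) /\
  exists M : R, forall v : H, ipnorm ip (T v) <= M * ipnorm ip v.

Definition adjoint_of (ip : H -> H -> Cx R) (T S : H -> H) : Prop :=
  forall a b : H, ip (T a) b = ip a (S b).

Definition unitary (ip : H -> H -> Cx R) (T : H -> H) : Prop :=
  bounded_op ip T /\
  exists S : H -> H, adjoint_of ip T S /\
    (forall v, T (S v) = v) /\ (forall v, S (T v) = v).

Definition unitary_rep (n : nat) (ip : H -> H -> Cx R)
    (U : 'rV[R]_n -> H -> H) : Prop :=
  (forall y, unitary ip (U y)) /\
  (forall v, U 0 v = v) /\
  (forall y z v, U (y + z) v = U y (U z v)).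

Definition weakly_continuous (n : nat) (ip : H -> H -> Cx R)
    (U : 'rV[R]_n -> H -> H) : Prop :=
  forall a b : H, continuous (fun y : 'rV[R]_n => ip a (U y b)).

Definition comm (A B : H -> H) : H -> H := fun v => A (B v) - B (A v).
Definition acomm (A B : H -> H) : H -> H := fun v => A (B v) + B (A v).

End Hilbert.

Definition Mink (R : realType) (d : nat) : Type := (R * 'rV[R]_(d.-1))%type.

(* Translation covariance gives pi(t, x + z) = U(z) pi(t, x) U(z)^dagger, and
   a weakly continuous unitary representation is strongly continuous because
   |U(z) w - w|^2 = 2 |w|^2 - 2 Re <w, U(z) w>.  Hence pi(t, x + z) -> pi(t, x)
   strongly as z -> 0, so that
     [psi(t, x), pi(t, x + z)] v -> [psi(t, x), pi(t, x)] v,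
   and likewise for the anticommutator.  For z <> 0 the left-hand side
   vanishes by hypothesis, and since d >= 2 the point 0 of R^(d-1) is not
   isolated, so the limit is 0. *)

From HB Require Import structures.
From mathcomp Require Import all_boot all_order all_algebra.
From mathcomp Require Import all_classical all_reals all_analysis.
From mathcomp Require Import complex.
From mathcomp Require Import lra.
Import Order.TTheory GRing.Theory Num.Theory.
Import numFieldNormedType.Exports.
Set Implicit Arguments.
Unset Strict Implicit.
Local Open Scope ring_scope.
Local Open Scope classical_set_scope.

Section InnerProductSpace.
Variables (R : realType) (H : lmodType (Cx R)) (ip : H -> H -> Cx R).
Hypothesis ipH : is_inner_product ip.

Definition normsq (v : H) : R := complex.Re (ip v v).

Lemma ipDr a u v : ip a (u + v) = ip a u + ip a v.
Proof. by have := ip_linear ipH a 1 u v; rewrite scale1r mul1r. Qed.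

Lemma ip0r a : ip a 0 = 0.
Proof. by apply: (addrI (ip a 0)); rewrite -ipDr !addr0. Qed.

Lemma ipNr a u : ip a (- u) = - ip a u.
Proof. by apply/eqP; rewrite -addr_eq0 -ipDr addNr ip0r. Qed.

Lemma Re_ipC u v : complex.Re (ip u v) = complex.Re (ip v u).
Proof. by rewrite (ip_conj_sym ipH); case: (ip v u). Qed.

Lemma normsq_ge0 v : 0 <= normsq v.
Proof. by have := ip_pos ipH v; rewrite lecE => /andP[]. Qed.

Lemma normsq_eq0 v : normsq v = 0 -> v = 0.
Proof.
move=> v0; apply: (ip_definite ipH).
move: v0 (ger0_Im (ip_pos ipH v)); rewrite /normsq.
by case: (ip v v) => a b /= -> ->.
Qed.

Lemma normsqD u v :
  normsq (u + v) = normsq u + normsq v + 2 * complex.Re (ip u v).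
Proof.
rewrite /normsq ipDr raddfD /= !(Re_ipC (u + v)) !ipDr !raddfD /= (Re_ipC v u).
lra.
Qed.

Lemma normsq0 : normsq 0 = 0.
Proof. by rewrite /normsq ip0r. Qed.

Lemma normsqN v : normsq (- v) = normsq v.
Proof. by rewrite /normsq ipNr raddfN /= Re_ipC ipNr raddfN opprK. Qed.

Lemma normsqD_le u v : normsq (u + v) <= 2 * normsq u + 2 * normsq v.
Proof.
have := normsq_ge0 (u - v).
rewrite normsqD normsqD normsqN ipNr raddfN /=; lra.
Qed.

Lemma normsqB_le u v : normsq (u - v) <= 2 * normsq u + 2 * normsq v.
Proof. by rewrite -(normsqN v); apply: normsqD_le. Qed.

Lemma bounded_opB T : bounded_op ip T -> forall u v, T (u - v) = T u - T v.
Proof. by move=> [linT _] u v; rewrite addrC -scaleN1r linT scaleN1r addrC. Qed.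

Lemma normsq_ipnorm v : normsq v = ipnorm ip v ^+ 2.
Proof. by rewrite sqr_sqrtr // normsq_ge0. Qed.

Lemma bounded_op_normsq T : bounded_op ip T ->
  exists K : R, forall v, normsq (T v) <= K * normsq v.
Proof.
move=> [_ [M leM]]; exists (M ^+ 2) => v.
rewrite !normsq_ipnorm -exprMn.
have Tv_ge0 : 0 <= ipnorm ip (T v) by apply: sqrtr_ge0.
by rewrite ler_sqr ?nnegrE ?leM // (le_trans Tv_ge0 (leM v)).
Qed.

Lemma unitary_ip T : unitary ip T -> forall u v, ip (T u) (T v) = ip u v.
Proof. by move=> [_ [S [adjS [_ ST]]]] u v; rewrite adjS ST. Qed.

Lemma unitary_normsq T : unitary ip T -> forall v, normsq (T v) = normsq v.
Proof. by move=> unitT v; rewrite /normsq unitary_ip. Qed.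

Lemma unitary_rep_adjoint n (U : 'rV[R]_n -> H -> H) :
  unitary_rep ip U -> forall z, adjoint_of ip (U z) (U (- z)).
Proof.
move=> [unitU [U0 UD]] z u v.
by rewrite -{1}(U0 v) -(subrr z) UD unitary_ip.
Qed.

End InnerProductSpace.

Section StrongConvergence.
Variables (R : realType) (H : lmodType (Cx R)) (ip : H -> H -> Cx R).
Hypothesis ipH : is_inner_product ip.
Variables (T : Type) (F : set_system T).
Context {FF : Filter F}.

Definition strong_cvg (f : T -> H) (l : H) : Prop :=
  (fun x => normsq ip (f x - l)) @ F --> (0 : R).

Lemma strong_cvg_dominated (f : T -> H) (l : H) (g : T -> R) :
  g @ F --> (0 : R) -> (forall x, normsq ip (f x - l) <= g x) ->
  strong_cvg f l.
Proof.
move=> g0 le_g; apply: (squeeze_cvgr _ (cvg_cst 0) g0).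
by near=> x; rewrite normsq_ge0 ?le_g.
Unshelve. all: end_near.
Qed.

Lemma strong_cvg_dominated1 f l h n (K : R) : strong_cvg f l ->
  (forall x, normsq ip (h x - n) <= K * normsq ip (f x - l)) ->
  strong_cvg h n.
Proof.
move=> fl le_h; apply: strong_cvg_dominated le_h.
by rewrite -(mulr0 K); apply: cvgMr.
Qed.

Lemma strong_cvg_dominated2 f l g m h n : strong_cvg f l -> strong_cvg g m ->
  (forall x, normsq ip (h x - n) <=
             2 * normsq ip (f x - l) + 2 * normsq ip (g x - m)) ->
  strong_cvg h n.
Proof.
move=> fl gm le_h; apply: strong_cvg_dominated le_h.
by rewrite -(addr0 0) -{1 2}(mulr0 2); apply: cvgD; apply: cvgMr.
Qed.

Lemma strong_cvgD f g l m : strong_cvg f l -> strong_cvg g m ->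
  strong_cvg (fun x => f x + g x) (l + m).
Proof.
move=> fl gm; apply: strong_cvg_dominated2 fl gm _ => x.
by rewrite opprD addrACA; apply: normsqD_le.
Qed.

Lemma strong_cvgB f g l m : strong_cvg f l -> strong_cvg g m ->
  strong_cvg (fun x => f x - g x) (l - m).
Proof.
move=> fl gm; apply: strong_cvg_dominated2 fl gm _ => x.
by rewrite opprD addrACA -opprD; apply: normsqB_le.
Qed.

Lemma strong_cvg_bounded_op A f l : bounded_op ip A -> strong_cvg f l ->
  strong_cvg (fun x => A (f x)) (A l).
Proof.
move=> boundA fl; have [K leK] := bounded_op_normsq ipH boundA.
by apply: strong_cvg_dominated1 fl _ => x; rewrite -(bounded_opB boundA).
Qed.

Lemma strong_cvg_unitary (V : T -> H -> H) f l m :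
  (forall x, unitary ip (V x)) -> strong_cvg f l ->
  strong_cvg (fun x => V x l) m -> strong_cvg (fun x => V x (f x)) m.
Proof.
move=> unitV fl Vlm; apply: strong_cvg_dominated2 fl Vlm _ => x.
have boundVx : bounded_op ip (V x) by case: (unitV x).
rewrite -[V x (f x)](subrK (V x l)) -(bounded_opB boundVx) -addrA.
by rewrite -(unitary_normsq (unitV x) (f x - l)); apply: normsqD_le.
Qed.

Lemma strong_cvg_unique {PF : ProperFilter F} f l m :
  strong_cvg f l -> strong_cvg f m -> l = m.
Proof.
move=> fl fm; apply/eqP; rewrite -subr_eq0; apply/eqP/(normsq_eq0 ipH).
have lm : strong_cvg (fun=> l) m.
  apply: strong_cvg_dominated2 fm fl _ => x.
  have -> : l - m = (f x - m) - (f x - l).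
    by rewrite opprB [RHS]addrC addrA subrK.
  exact: normsqB_le.
exact: cvg_unique (cvg_cst _) lm.
Qed.

End StrongConvergence.

Lemma cvg_Re (R : realType) (T : Type) (F : set_system T) {FF : Filter F}
  (f : T -> Cx R) (l : Cx R) :
  f @ F --> l -> (fun x => complex.Re (f x)) @ F --> complex.Re l.
Proof.
move=> /cvgrPdist_lt fl; apply/cvgrPdist_lt => e e0.
have : (0 : Cx R) < e%:C%C by rewrite ltcR.
move=> /fl; apply: filterS => x.
rewrite -raddfB normc_def ltcR; apply: le_lt_trans.
rewrite -sqrtr_sqr; apply: ler_wsqrtr.
by rewrite lerDl sqr_ge0.
Qed.

Lemma dnbhs_proper (K : numFieldType) (V : normedModType K) (c x : V) :
  c != 0 -> ProperFilter x^'.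
Proof.
move=> c0; apply: Build_ProperFilter_ex => A /nbhs_ballP[_/posnumP[e] Ae].
have nc : 0 < `|c| by rewrite normr_gt0.
exists (x + (e%:num / (2 * `|c|)) *: c); apply: Ae.
  rewrite -ball_normE /ball_ /= opprD addNKr normrN normrZ.
  rewrite ger0_norm; last first.
    by rewrite divr_ge0 // ltW // mulr_gt0.
  by rewrite invfM mulrA mulfVK ?gt_eqF // ltr_pdivrMr // ltr_pMr // ltr1n.
rewrite addrC -subr_eq0 addrK scaler_eq0 negb_or c0 andbT.
by rewrite mulf_neq0 ?invr_eq0 ?mulf_neq0 ?gt_eqF.
Qed.

Lemma neq_addr (V : zmodType) (x z : V) : z != 0 -> x != x + z.
Proof. by move=> z0; rewrite -subr_eq0 opprD addNKr oppr_eq0. Qed.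

Lemma const_mx1_neq0 (K : nzRingType) n :
  (0 < n)%N -> const_mx 1 != 0 :> 'rV[K]_n.
Proof.
move=> n0; apply/eqP => /matrixP/(_ 0 (Ordinal n0))/eqP.
by rewrite !mxE oner_eq0.
Qed.

Lemma strong_cvg_dnbhs_eq0 (R : realType) (H : lmodType (Cx R))
    (ip : H -> H -> Cx R) (V : normedModType R) (c a : V) (f : V -> H) (l : H) :
  is_inner_product ip -> c != 0 ->
  strong_cvg ip (nbhs a) f l -> (forall z, z != a -> f z = 0) -> l = 0.
Proof.
move=> ipH c0 fl f0; have PF := dnbhs_proper a c0.
apply: (strong_cvg_unique ipH (F := a^') (f := f)).
  by move=> P /fl; apply: nbhs_dnbhs.
apply: cvg_near_cst; near=> z.
have za : z != a by near: z; exact: nbhs_dnbhs_neq.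
by rewrite f0 // subr0 (normsq0 ipH).
Unshelve. all: end_near.
Qed.

Section UnitaryRepresentation.
Variables (R : realType) (H : lmodType (Cx R)) (ip : H -> H -> Cx R).
Hypothesis ipH : is_inner_product ip.
Variables (n : nat) (U : 'rV[R]_n -> H -> H).
Hypotheses (repU : unitary_rep ip U) (contU : weakly_continuous ip U).

Lemma weakly_continuous_strong_cvg0 w :
  strong_cvg ip (nbhs (0 : 'rV[R]_n)) (fun z => U z w) w.
Proof.
have [unitU [U0 _]] := repU.
have Re_cvg :
    (fun z => complex.Re (ip w (U z w))) @ nbhs (0 : 'rV[R]_n) --> normsq ip w.
  by move: (@contU w w 0) => /cvg_Re /=; rewrite U0.
have UwE z : normsq ip (U z w - w) =
    2 * normsq ip w - 2 * complex.Re (ip w (U z w)).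
  rewrite normsqD // normsqN // (unitary_normsq (unitU z)) ipNr // raddfN /=.
  rewrite (Re_ipC ipH); lra.
rewrite /strong_cvg (funext UwE) -(subrr (2 * normsq ip w)).
exact: cvgB (cvg_cst _) (cvgMr Re_cvg).
Qed.

Lemma strong_cvg_conj (B : H -> H) u : bounded_op ip B ->
  strong_cvg ip (nbhs (0 : 'rV[R]_n)) (fun z => U z (B (U (- z) u))) (B u).
Proof.
move=> boundB; have [unitU _] := repU.
apply: (strong_cvg_unitary ipH unitU _ (weakly_continuous_strong_cvg0 (B u))).
apply: (strong_cvg_bounded_op ipH boundB).
have N0 : - z @[z --> (0 : 'rV[R]_n)] --> (0 : 'rV[R]_n).
  have := cvgN (F := nbhs (0 : 'rV[R]_n)) (f := id) (a := 0) cvg_id.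
  by rewrite oppr0; apply.
exact: (cvg_comp _ (fun z => normsq ip (U z u - u)) N0
  (weakly_continuous_strong_cvg0 u)).
Qed.

Variable P : 'rV[R]_n -> H -> H.
Hypotheses (boundP : forall x, bounded_op ip (P x))
  (covP : forall x z v, U z (P x (U (- z) v)) = P (x + z) v).

Lemma strong_cvg_translate x w :
  strong_cvg ip (nbhs (0 : 'rV[R]_n)) (fun z => P (x + z) w) (P x w).
Proof.
rewrite -(funext (fun z => covP x z w)).
exact: strong_cvg_conj (boundP x).
Qed.

Hypothesis n_gt0 : (0 < n)%N.

Lemma comm_eq0_at_coincidence A x v : bounded_op ip A ->
  (forall y, x != y -> comm A (P y) v = 0) -> comm A (P x) v = 0.
Proof.
move=> boundA comm0.
apply: (strong_cvg_dnbhs_eq0 ipH (const_mx1_neq0 R n_gt0) (a := 0)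
  (f := fun z => comm A (P (x + z)) v)); last first.
  by move=> z z0; apply: comm0; apply: neq_addr.
apply: (strong_cvgB ipH _ (strong_cvg_translate x (A v))).
exact: (strong_cvg_bounded_op ipH (FF := nbhs_filter _) boundA
  (strong_cvg_translate x v)).
Qed.

Lemma acomm_eq0_at_coincidence A x v : bounded_op ip A ->
  (forall y, x != y -> acomm A (P y) v = 0) -> acomm A (P x) v = 0.
Proof.
move=> boundA acomm0.
apply: (strong_cvg_dnbhs_eq0 ipH (const_mx1_neq0 R n_gt0) (a := 0)
  (f := fun z => acomm A (P (x + z)) v)); last first.
  by move=> z z0; apply: acomm0; apply: neq_addr.
apply: (strong_cvgD ipH _ (strong_cvg_translate x (A v))).
exact: (strong_cvg_bounded_op ipH (FF := nbhs_filter _) boundA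
  (strong_cvg_translate x v)).
Qed.

End UnitaryRepresentation.

Theorem corollary1 (R : realType) (d : nat) (hd : (2 <= d)%N)
  (H : lmodType (Cx R)) (ip : H -> H -> Cx R) (hH : is_hilbert ip)
  (U : 'rV[R]_(d.-1) -> H -> H) (hU : unitary_rep ip U)
  (psi pi : Mink R d -> H -> H)
  (hpsi : forall p, bounded_op ip (psi p))
  (hpi : forall p, bounded_op ip (pi p))
  (h1 : weakly_continuous ip U)
  (h2 : forall (y x : 'rV[R]_(d.-1)) (t : R) (Ud : H -> H),
      adjoint_of ip (U y) Ud ->
      forall v : H, U y (pi (t, x) (Ud v)) = pi (t, x + y) v) :
  forall t : R,
    ((forall x y : 'rV[R]_(d.-1), x != y ->
        forall v : H, comm (psi (t, x)) (pi (t, y)) v = 0) <->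
     (forall x y : 'rV[R]_(d.-1),
        forall v : H, comm (psi (t, x)) (pi (t, y)) v = 0)) /\
    ((forall x y : 'rV[R]_(d.-1), x != y ->
        forall v : H, acomm (psi (t, x)) (pi (t, y)) v = 0) <->
     (forall x y : 'rV[R]_(d.-1),
        forall v : H, acomm (psi (t, x)) (pi (t, y)) v = 0)).
Proof.
move=> t; have ipH := hH.1.
have d_gt0 : (0 < d.-1)%N by rewrite -subn1 subn_gt0.
have covpi x z v : U z (pi (t, x) (U (- z) v)) = pi (t, x + z) v.
  exact: h2 (unitary_rep_adjoint hU z) v.
have boundpi x : bounded_op ip (pi (t, x)) by apply: hpi.
split.
- split=> [comm0 x y v | comm0 x y _ v]; last exact: comm0.
  have [<-|xy] := eqVneq x y; last exact: comm0 xy v.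
  apply: (comm_eq0_at_coincidence ipH hU h1 boundpi covpi d_gt0 (hpsi (t, x))).
  by move=> z xz; apply: comm0.
- split=> [acomm0 x y v | acomm0 x y _ v]; last exact: acomm0.
  have [<-|xy] := eqVneq x y; last exact: acomm0 xy v.
  apply: (acomm_eq0_at_coincidence ipH hU h1 boundpi covpi d_gt0 (hpsi (t, x))).
  by move=> z xz; apply: acomm0.
Qed.
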